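(* Let $X$ be a finite nonempty alphabet and $\mathcal{L}\subseteq 2^{X^*}$ a nontrivial, WP-recursive language family closed under finite unions, finite intersections and complementation. Let $C,A\subseteq X^*$ be recursive languages with $A$ infinite, $A\cap C=\emptyset$, and $A\notin\mathit{cclass}_1(C,\mathcal{L})$. Then there is a recursive language $B\subseteq A$ with $B\in\mathit{ccore}_1(C,\mathcal{L})$.
   Context: $\mathcal{L}$ is nontrivial if $\emptyset,X^*\in\mathcal{L}$ and for all $Q\in\mathcal{L}$ and finite $E\subseteq X^*$ both $Q\cup E\in\mathcal{L}$ and $Q\setminus E\in\mathcal{L}$. $\mathcal{L}$ is WP-recursive if there is a surjection $e:\mathbb{N}_0\to\mathcal{L}$ such that the predicate ''$w\in e(i)$'' (for $i\in\mathbb{N}_0$, $w\in X^*$) is decidable (uniformly in $i$ and $w$). For $C\subseteq X^*$ and an infinite $A\subseteq X^*\setminus C$: $A\in\mathit{cclass}_1(C,\mathcal{L})$ iff there is $Q\in\mathcal{L}$ with $X^*\setminus Q\in\mathcal{L}$, $C\subseteq Q$ and $A\subseteq X^*\setminus Q$; $B\in\mathit{ccore}_1(C,\mathcal{L})$ iff $B$ is an infinite subset of $X^*\setminus C$ and every infinite $B'\subseteq B$ satisfies $B'\notin\mathit{cclass}_1(C,\mathcal{L})$. *)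

From mathcomp Require Import all_boot.
Set Implicit Arguments. Unset Strict Implicit. Unset Printing Implicit Defensive.

Inductive rcode : Type :=
| RZero
| RSucc
| RProj of nat
| RComp of rcode & seq rcode
| RPrim of rcode & rcode         (* primitive recursion on the first argument *)
| RMu of rcode.

Inductive eval : rcode -> seq nat -> nat -> Prop :=
| ev_zero v : eval RZero v 0
| ev_succ v : eval RSucc v (head 0 v).+1
| ev_proj i v : eval (RProj i) v (nth 0 v i)
| ev_comp f gs v ys y : evals gs v ys -> eval f ys y -> eval (RComp f gs) v y
| ev_prim0 f g v y : eval f v y -> eval (RPrim f g) (0 :: v) y
| ev_primS f g n v z y :
    eval (RPrim f g) (n :: v) z -> eval g (n :: z :: v) y ->
    eval (RPrim f g) (n.+1 :: v) y
| ev_mu f v n :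
    eval f (n :: v) 0 ->
    (forall m, m < n -> exists2 k, eval f (m :: v) k & k <> 0) ->
    eval (RMu f) v n
with evals : seq rcode -> seq nat -> seq nat -> Prop :=
| evs_nil v : evals [::] v [::]
| evs_cons g gs v y ys : eval g v y -> evals gs v ys -> evals (g :: gs) v (y :: ys).

(* bijective base-#|X| numeration *)
Fixpoint wcode (X : finType) (w : seq X) : nat :=
  match w with
  | [::] => 0
  | x :: w' => (enum_rank x).+1 + #|X| * wcode w'
  end.

Definition lang (X : finType) := seq X -> bool.
Arguments lang : clear implicits.

Definition recursive (X : finType) (L : lang X) : Prop :=
  exists c : rcode, forall w : seq X, eval c [:: wcode w] (nat_of_bool (L w)).

Definition lang_finite (X : finType) (A : lang X) : Prop :=
  exists s : seq (seq X), forall w, A w -> w \in s.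
Definition lang_infinite (X : finType) (A : lang X) : Prop := ~ lang_finite A.

Definition lsubset (X : finType) (A B : lang X) : Prop := forall w, A w -> B w.
Definition lcompl (X : finType) (A : lang X) : lang X := fun w => ~~ A w.

Definition lfamily (X : finType) := lang X -> Prop.
Arguments lfamily : clear implicits.

Definition nontrivial (X : finType) (L : lfamily X) : Prop :=
  [/\ L (fun _ => false), L (fun _ => true) &
      forall Q, L Q -> forall E : seq (seq X),
        L (fun w => Q w || (w \in E)) /\ L (fun w => Q w && (w \notin E))].

Definition WP_recursive (X : finType) (L : lfamily X) : Prop :=
  exists e : nat -> lang X,
    (forall i, L (e i)) /\ (forall Q, L Q -> exists i, e i = Q) /\
    exists c : rcode, forall i (w : seq X), eval c [:: i; wcode w] (nat_of_bool (e i w)).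

Definition closed_union (X : finType) (L : lfamily X) : Prop :=
  forall Q1 Q2, L Q1 -> L Q2 -> L (fun w => Q1 w || Q2 w).
Definition closed_inter (X : finType) (L : lfamily X) : Prop :=
  forall Q1 Q2, L Q1 -> L Q2 -> L (fun w => Q1 w && Q2 w).
Definition closed_compl (X : finType) (L : lfamily X) : Prop :=
  forall Q, L Q -> L (lcompl Q).

Definition cclass1 (X : finType) (C : lang X) (L : lfamily X) (A : lang X) : Prop :=
  [/\ lang_infinite A, lsubset A (lcompl C) &
      exists Q, [/\ L Q, L (lcompl Q), lsubset C Q & lsubset A (lcompl Q)]].

Definition ccore1 (X : finType) (C : lang X) (L : lfamily X) (B : lang X) : Prop :=
  [/\ lang_infinite B, lsubset B (lcompl C) &
      forall B', lsubset B' B -> lang_infinite B' -> ~ cclass1 C L B'].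

(* Enumerate L as e_0, e_1, ... and work with codes of words.  Call x good at
   stage n if x is in A and, for every i <= n, either x is in e_i or e_i is
   already seen to miss a point of C below x.  Intersecting the e_i (i <= n)
   that contain C gives a separator Q in L with C <= Q; since A is not in
   cclass_1(C, L), A meets Q infinitely often, and beyond the finitely many
   witnesses of failure all those points are good at stage n.  B takes, for
   each n, the first point x >= n good at stage n.  B is recursive, infinite
   and contained in A, and if an infinite B' <= B were separated from C by
   some e_i, all but finitely many points of B' would be chosen at a stage
   n >= i, hence lie in e_i, as e_i contains C. *)
From Stdlib Require Import Classical ClassicalEpsilon.
From mathcomp Require Import all_boot.
Set Implicit Arguments. Unset Strict Implicit. Unset Printing Implicit Defensive.

(** * Computable functions *)

Definition computable k (f : seq nat -> nat) :=
  exists c, forall v, size v = k -> eval c v (f v).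

Lemma computable_ext k f g :
  computable k f -> (forall v, size v = k -> f v = g v) -> computable k g.
Proof. by case=> c hc e; exists c => v hv; rewrite -e //; apply: hc. Qed.

Lemma computable0 k : computable k (fun _ => 0).
Proof. by exists RZero => v _; constructor. Qed.

Lemma computable_nth k i : computable k (fun v => nth 0 v i).
Proof. by exists (RProj i) => v _; constructor. Qed.

Lemma computableS k f : computable k f -> computable k (fun v => (f v).+1).
Proof.
case=> c hc; exists (RComp RSucc [:: c]) => v hv.
apply: (@ev_comp _ _ _ [:: f v]); first by constructor; [apply: hc | constructor].
exact: (ev_succ [:: f v]).
Qed.

Fixpoint all_computable k (gs : seq (seq nat -> nat)) : Prop :=
  if gs is g :: gs' then computable k g /\ all_computable k gs' else True.

Lemma all_computable_map k (s : seq nat) (h : nat -> seq nat -> nat) :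
  (forall j, computable k (h j)) -> all_computable k (map h s).
Proof. by move=> hh; elim: s => //= j s ->; split. Qed.

Lemma all_computable_evals k gs : all_computable k gs ->
  exists cs, forall v, size v = k -> evals cs v (map (fun g => g v) gs).
Proof.
elim: gs => [|g gs IH] /=; first by exists [::] => v _; constructor.
by case=> [[c hc] /IH [cs hcs]]; exists (c :: cs) => v hv; constructor; auto.
Qed.

Lemma computable_comp k m F gs :
  computable m F -> all_computable k gs -> size gs = m ->
  computable k (fun v => F (map (fun g => g v) gs)).
Proof.
case=> cF hF /all_computable_evals [cs hcs] hs; exists (RComp cF cs) => v hv.
by apply: ev_comp; [apply: hcs | apply: hF; rewrite size_map].
Qed.

Fixpoint primrec (f g : seq nat -> nat) n v :=
  if n is n'.+1 then g (n' :: primrec f g n' v :: v) else f v.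

Lemma computable_primrec k f g : computable k f -> computable k.+2 g ->
  computable k.+1 (fun v => primrec f g (head 0 v) (behead v)).
Proof.
case=> cf hf [cg hg]; exists (RPrim cf cg) => [[|n v]] //= [hv].
elim: n => [|n IH] /=; first by constructor; apply: hf.
by apply: ev_primS; [apply: IH | apply: hg => /=; rewrite hv].
Qed.

Lemma computable_subn k f g :
  computable k f -> computable k g -> computable k (fun v => f v - g v).
Proof.
have pred1 : computable 1 (fun v => (head 0 v).-1).
  apply: computable_ext (computable_primrec (computable0 0) (computable_nth 2 0)) _.
  by move=> [|[|n] [|]].
have pred3 : computable 3 (fun v => (nth 0 v 1).-1).
  apply: computable_ext (computable_comp pred1
    (all_computable_map [:: 1] (fun j => computable_nth 3 j)) _) _ => //.
have sub2 : computable 2 (fun v => nth 0 v 1 - nth 0 v 0).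
  apply: computable_ext (computable_primrec (computable_nth 1 0) pred3) _.
  move=> [|b [|a [|]]] //= _.
  by elim: b => [|b /= ->]; rewrite ?subn0 ?subnS.
move=> hf hg.
exact: computable_ext (computable_comp sub2 (gs := [:: g; f]) _ _) _.
Qed.

Definition computableb k (P : seq nat -> bool) :=
  computable k (fun v => nat_of_bool (P v)).

Lemma computableb_ext k P Q :
  computableb k P -> (forall v, size v = k -> P v = Q v) -> computableb k Q.
Proof. by move=> h e; apply: computable_ext h _ => v /e ->. Qed.

Lemma computableb_not k P : computableb k P -> computableb k (fun v => ~~ P v).
Proof.
move=> h; apply: computable_ext (computable_subn (computableS (computable0 k)) h) _.
by move=> v _; case: (P v).
Qed.

Lemma computableb_and k P Q :
  computableb k P -> computableb k Q -> computableb k (fun v => P v && Q v).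
Proof.
move=> hP /computableb_not hQ; apply: computable_ext (computable_subn hP hQ) _.
by move=> v _; case: (P v); case: (Q v).
Qed.

Lemma computableb_or k P Q :
  computableb k P -> computableb k Q -> computableb k (fun v => P v || Q v).
Proof.
move=> /computableb_not hP /computableb_not hQ.
apply: computableb_ext (computableb_not (computableb_and hP hQ)) _ => v _.
by case: (P v); case: (Q v).
Qed.

Lemma computableb_leq k f g :
  computable k f -> computable k g -> computableb k (fun v => f v <= g v).
Proof.
move=> hf hg; have one := computableS (computable0 k).
apply: computable_ext (computable_subn one (computable_subn hf hg)) _ => v _.
by rewrite -subn_eq0; case: (f v - g v).
Qed.

Lemma computableb_comp k m P gs :
  computableb m P -> all_computable k gs -> size gs = m ->
  computableb k (fun v => P (map (fun g => g v) gs)).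
Proof. exact: computable_comp. Qed.

Lemma computableb_select k m P (js : seq nat) :
  computableb m P -> size js = m ->
  computableb k (fun v => P (map (fun j => nth 0 v j) js)).
Proof.
move=> hP hs.
apply: computableb_ext (computableb_comp hP (gs := map (fun j v => nth 0 v j) js) _ _) _.
- by apply: all_computable_map => j; apply: computable_nth.
- by rewrite size_map.
by move=> v _; rewrite -map_comp.
Qed.

Lemma computableb_has k P : computableb k.+1 P ->
  computableb k.+1 (fun v => has (fun y => P (y :: behead v)) (iota 0 (head 0 v).+1)).
Proof.
move=> hP.
have hf : computableb k (fun v => P (0 :: v)).
  apply: computableb_ext (computableb_comp hP
    (gs := (fun _ => 0) :: map (fun j v => nth 0 v j) (iota 0 k)) _ _) _.
  - by split; [apply: computable0 | apply: all_computable_map => j; apply: computable_nth].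
  - by rewrite /= size_map size_iota.
  by move=> v hv /=; rewrite -map_comp /= -hv; have := mkseq_nth 0 v; rewrite /mkseq => ->.
have hg : computableb k.+2 (fun v => (0 < nth 0 v 1) || P ((nth 0 v 0).+1 :: drop 2 v)).
  apply: computableb_or.
    exact: computableb_leq (computableS (computable0 _)) (computable_nth _ _).
  apply: computableb_ext (computableb_comp hP
    (gs := (fun v => (nth 0 v 0).+1) :: map (fun j v => nth 0 v j.+2) (iota 0 k)) _ _) _.
  - split; first exact/computableS/computable_nth.
    by apply: all_computable_map => j; apply: computable_nth.
  - by rewrite /= size_map size_iota.
  move=> [|n [|z v]] //= [hv]; rewrite -map_comp /=; congr (P (_ :: _)).
  by rewrite drop0 -{2}(mkseq_nth 0 v) hv /mkseq; apply: eq_map.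
apply: computable_ext (computable_primrec hf hg) _ => [[|m v]] //= _.
elim: m => [|m IH]; first by rewrite /= orbF.
have -> : iota 1 m.+1 = iota 1 m ++ [:: m.+1].
  by have := iotaD 1 m 1; rewrite addn1 add1n.
by rewrite [LHS]/= IH lt0b drop0 has_cat /= orbF orbA.
Qed.

Lemma computableb_all k P : computableb k.+1 P ->
  computableb k.+1 (fun v => all (fun y => P (y :: behead v)) (iota 0 (head 0 v).+1)).
Proof.
move=> hP; apply: computableb_ext (computableb_not (computableb_has (computableb_not hP))) _.
by move=> v _; elim: (iota _ _) => //= y s <-; rewrite negb_or negbK.
Qed.

(** * Coding words by numbers *)

Lemma wcode_inj (X : finType) : injective (@wcode X).
Proof.
have digit k r q : r < k -> (r + k * q) %% k = r /\ (r + k * q) %/ k = q.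
  move=> rk; have k0 : 0 < k by apply: leq_ltn_trans rk.
  by rewrite addnC mulnC modnMDl modn_small // divnMDl // divn_small // addn0.
elim=> [|x w1 IH] [|y w2] //= /eqP; rewrite !addSn eqSS => /eqP E.
have [m1 d1] := digit _ _ (wcode w1) (ltn_ord (enum_rank x)).
have [m2 d2] := digit _ _ (wcode w2) (ltn_ord (enum_rank y)).
have ex : enum_rank x = enum_rank y by apply: val_inj; rewrite /= -m1 E m2.
by rewrite (enum_rank_inj ex) (IH w2) // -d1 E d2.
Qed.

Section Decoding.
Variables (X : finType) (hX : 0 < #|X|).

Lemma wcode_surj n : exists w : seq X, wcode w = n.
Proof.
elim/ltn_ind: n => [[|m]] IH; first by exists [::].
have hr := ltn_pmod m hX.
have [w hw] := IH (m %/ #|X|) (leq_ltn_trans (leq_div m _) (ltnSn m)).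
exists (enum_val (Ordinal hr) :: w) => /=.
by rewrite enum_valK /= hw addSn [in RHS](divn_eq m #|X|) mulnC addnC.
Qed.

Definition wdecode n : seq X :=
  proj1_sig (constructive_indefinite_description _ (wcode_surj n)).

Lemma wdecodeK : cancel wdecode (@wcode X).
Proof. by move=> n; apply: proj2_sig (constructive_indefinite_description _ (wcode_surj n)). Qed.

Lemma wcodeK : cancel (@wcode X) wdecode.
Proof. by move=> w; apply: wcode_inj; rewrite wdecodeK. Qed.

Lemma lang_infiniteP (P : lang X) :
  lang_infinite P <-> forall N, exists2 w, P w & N <= wcode w.
Proof.
split=> [Pinf N | Punb [s hs]].
  apply: NNPP => Pbnd; apply: Pinf; exists (map wdecode (iota 0 N)) => w Pw.
  have hw : wcode w < N by rewrite ltnNge; apply/negP => hle; apply: Pbnd; exists w.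
  by rewrite -(wcodeK w); apply: map_f; rewrite mem_iota.
have [w /hs ws] := Punb (sumn (map (@wcode X) s)).+1; apply/negP; rewrite -leqNgt.
elim: s ws {hs} => //= u s IH; rewrite in_cons => /orP [/eqP -> | /IH].
  exact: leq_addr.
by move/leq_trans; apply; apply: leq_addl.
Qed.

Lemma recursive_computableb (P : lang X) :
  recursive P -> computableb 1 (fun v => P (wdecode (nth 0 v 0))).
Proof. by case=> c hc; exists c => [[|x [|]]] //= _; have := hc (wdecode x); rewrite wdecodeK. Qed.

Lemma computableb_uniform (e : nat -> lang X) :
  (exists c, forall i w, eval c [:: i; wcode w] (nat_of_bool (e i w))) ->
  computableb 2 (fun v => e (nth 0 v 0) (wdecode (nth 0 v 1))).
Proof.
case=> c hc; exists c => [[|i [|x [|]]]] //= _.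
by have := hc i (wdecode x); rewrite wdecodeK.
Qed.

Lemma computableb_recursive (P : pred nat) :
  computableb 1 (fun v => P (nth 0 v 0)) -> recursive (fun w : seq X => P (wcode w)).
Proof. by case=> c hc; exists c => w; apply: (hc [:: wcode w]). Qed.

End Decoding.

Lemma bounded_choice (P : nat -> nat -> Prop) n :
  (forall i, i < n -> exists y, P i y) ->
  exists M, forall i, i < n -> exists2 y, y <= M & P i y.
Proof.
elim: n => [|n IH] hP; first by exists 0.
have [M hM] := IH (fun i lt_in => hP i (ltnW lt_in)).
have [y hy] := hP n (ltnSn n).
exists (maxn M y) => i; rewrite ltnS leq_eqVlt => /orP [/eqP -> | /hM [z hz Pz]].
  by exists y => //; apply: leq_maxr.
by exists z => //; apply: leq_trans hz (leq_maxl _ _).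
Qed.

(** * The core construction on codes *)

Section Core.
Variables (a c : pred nat) (ee : nat -> pred nat).

Definition respects i x := ee i x || has (fun y => c y && ~~ ee i y) (iota 0 x.+1).

Definition good n x := a x && all (respects ^~ x) (iota 0 n.+1).

Definition first_good n x :=
  good n x && all (fun y => (n <= y) ==> (y < x) ==> ~~ good n y) (iota 0 x.+1).

Definition core x := has (first_good ^~ x) (iota 0 x.+1).

Lemma coreP x : core x ->
  exists n, [/\ n <= x, good n x & forall y, n <= y -> y < x -> ~~ good n y].
Proof.
case/hasP=> n; rewrite mem_iota ltnS => /andP [_ nx] /andP [gx /allP first].
exists n; split=> // y ny yx.
by have := first y; rewrite mem_iota ltnS (ltnW yx) ny yx; apply.
Qed.

Lemma core_sub x : core x -> a x.
Proof. by case/coreP=> n [_ /andP []]. Qed.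

Lemma computable_core :
  computableb 1 (fun v => a (nth 0 v 0)) -> computableb 1 (fun v => c (nth 0 v 0)) ->
  computableb 2 (fun v => ee (nth 0 v 0) (nth 0 v 1)) ->
  computableb 1 (fun v => core (nth 0 v 0)).
Proof.
move=> pa pc pe.
have pmiss : computableb 2 (fun v => c (nth 0 v 0) && ~~ ee (nth 0 v 1) (nth 0 v 0)).
  apply: computableb_and; first exact: (computableb_select 2 pc (js := [:: 0])).
  exact/computableb_not/(computableb_select 2 pe (js := [:: 1; 0])).
have presp : computableb 2 (fun v => respects (nth 0 v 0) (nth 0 v 1)).
  apply: computableb_or => //.
  apply: computableb_ext (computableb_select 2 (computableb_has pmiss) (js := [:: 1; 0]) _) _ => //.
have pgood : computableb 2 (fun v => good (nth 0 v 0) (nth 0 v 1)).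
  apply: computableb_ext
    (computableb_and (computableb_select 2 pa (js := [:: 1]) _) (computableb_all presp)) _ => //.
  by move=> [|n [|x [|]]].
have pnotgood : computableb 3 (fun v => (nth 0 v 1 <= nth 0 v 0) ==>
                     (nth 0 v 0 < nth 0 v 2) ==> ~~ good (nth 0 v 1) (nth 0 v 0)).
  apply: computableb_ext (computableb_or
    (computableb_not (computableb_leq (computable_nth 3 1) (computable_nth 3 0)))
    (computableb_or
      (computableb_not (computableb_leq (computableS (computable_nth 3 0)) (computable_nth 3 2)))
      (computableb_not (computableb_select 3 pgood (js := [:: 1; 0]) _)))) _ => //.
  by move=> v _ /=; do 2 case: (_ <= _).
have pfirst : computableb 2 (fun v => first_good (nth 0 v 0) (nth 0 v 1)).
  apply: computableb_and => //.
  exact: computableb_ext (computableb_select 2 (computableb_all pnotgood) (js := [:: 1; 0; 1]) _) _.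
exact: computableb_ext (computableb_select 1 (computableb_has pfirst) (js := [:: 0; 0]) _) _.
Qed.

Hypothesis good_unbounded : forall n N, exists2 x, N <= x & good n x.

Lemma core_unbounded N : exists2 x, N <= x & core x.
Proof.
have exN : exists x, (N <= x) && good N x.
  by have [x Nx gx] := good_unbounded N N; exists x; rewrite Nx.
case: (ex_minnP exN) => x /andP [Nx gx] minx; exists x => //.
apply/hasP; exists N; first by rewrite mem_iota ltnS.
rewrite /first_good gx; apply/allP => y _; apply/implyP => Ny; apply/implyP => yx.
by apply/negP => gy; have := minx y; rewrite Ny gy => /(_ isT); rewrite leqNgt yx.
Qed.

(* A point of core chosen at stage n < i lies below the first such point
   that exists; one chosen at stage n >= i respects e_i. *)
Lemma core_bounded_outside i : (forall y, c y -> ee i y) ->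
  exists M, forall x, core x -> ~~ ee i x -> x <= M.
Proof.
move=> Ci.
have [M hM] : exists M, forall n, n < i -> exists2 z, z <= M & (n <= z) && good n z.
  apply: bounded_choice => n _.
  by have [z nz gz] := good_unbounded n n; exists z; rewrite nz.
exists M => x /coreP [n [_ gx minx]] nex.
case: (ltnP n i) => [ni | le_in].
  have [z zM /andP [nz gz]] := hM n ni.
  by rewrite leqNgt; apply/negP => Mx; have := minx z nz (leq_ltn_trans zM Mx); rewrite gz.
move: gx => /andP [_ /allP /(_ i)]; rewrite mem_iota ltnS le_in /respects (negbTE nex).
by move=> /(_ isT) /hasP [y _ /andP [/Ci ->]].
Qed.

End Core.

(** * Separators and the core language *)

Section CoreLanguage.
Variables (X : finType) (hX : 0 < #|X|) (L : lfamily X) (C A : lang X).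
Variable e : nat -> lang X.
Hypotheses (hnt : nontrivial L) (hI : closed_inter L) (hC : closed_compl L).
Hypothesis Le : forall i, L (e i).

Lemma separator_below n : exists Q, [/\ L Q, lsubset C Q &
  forall i, i < n -> lsubset C (e i) -> lsubset Q (e i)].
Proof.
elim: n => [|n [Q [LQ CQ Qe]]]; first by exists (fun _ => true); case: hnt.
have [Ce | nCe] := classic (lsubset C (e n)); last first.
  exists Q; split=> // i; rewrite ltnS leq_eqVlt => /orP [/eqP -> // | ]; exact: Qe.
exists (fun w => Q w && e n w); split; first exact: hI.
  by move=> w Cw; rewrite CQ ?Ce.
move=> i; rewrite ltnS leq_eqVlt => /orP [/eqP -> _ w /andP [] // | /Qe Qei /Qei Qe_i].
by move=> w /andP [/Qe_i].
Qed.

Hypotheses (hAinf : lang_infinite A) (hAC : forall w, A w -> ~~ C w).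
Hypothesis hAnot : ~ cclass1 C L A.

(* Removing the finitely many points of A from a separator Q would put A in
   cclass_1(C, L). *)
Lemma infinite_inter_separator Q : L Q -> lsubset C Q -> lang_infinite (fun w => A w && Q w).
Proof.
move=> LQ CQ [s hs]; apply: hAnot; split=> //.
pose E := filter (fun u => ~~ C u) s.
have [_ _ fin_change] := hnt.
have LQE := (fin_change Q LQ E).2.
exists (fun w => Q w && (w \notin E)); split=> //; first exact: hC.
  by move=> w Cw; rewrite CQ // mem_filter Cw.
move=> w Aw; rewrite /lcompl mem_filter hAC //=.
by case Qw: (Q w) => //=; rewrite hs ?Aw.
Qed.

Let a x := A (wdecode hX x).
Let c x := C (wdecode hX x).
Let ee i x := e i (wdecode hX x).

Lemma good_unbounded n N : exists2 x, N <= x & good a c ee n x.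
Proof.
have [M hM] : exists M, forall i, i < n.+1 ->
    exists2 y, y <= M & (~ lsubset C (e i) -> c y && ~~ ee i y).
  apply: bounded_choice => i _.
  have [Ce | nCe] := classic (lsubset C (e i)); first by exists 0.
  have [w nCw] := not_all_ex_not _ _ nCe.
  have Cw : C w by apply: NNPP => nC; apply: nCw => /nC.
  have neiw : ~~ e i w by apply/negP => eiw; apply: nCw.
  by exists (wcode w) => _; rewrite /c /ee wcodeK Cw neiw.
have [Q [LQ CQ Qe]] := separator_below n.+1.
have [w /andP [Aw Qw] hw] := (lang_infiniteP hX _).1 (infinite_inter_separator LQ CQ) (maxn N M).
exists (wcode w); first exact: leq_trans (leq_maxl _ _) hw.
rewrite /good /a wcodeK Aw; apply/allP => i; rewrite mem_iota ltnS => /andP [_ i_n].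
have [Ce | nCe] := classic (lsubset C (e i)).
  by rewrite /respects /ee wcodeK (Qe i i_n Ce).
have [y yM /(_ nCe) miss] := hM i i_n.
apply/orP; right; apply/hasP; exists y => //.
by rewrite mem_iota ltnS (leq_trans yM) // (leq_trans (leq_maxr N M)).
Qed.

Definition core_lang : lang X := fun w => core a c ee (wcode w).

Lemma core_lang_sub : lsubset core_lang A.
Proof. by move=> w /core_sub; rewrite /a wcodeK. Qed.

Lemma recursive_core_lang : recursive C -> recursive A ->
  (exists c, forall i w, eval c [:: i; wcode w] (nat_of_bool (e i w))) ->
  recursive core_lang.
Proof.
move=> /(recursive_computableb hX) pc /(recursive_computableb hX) pa /(computableb_uniform hX) pe.
exact/computableb_recursive/computable_core.
Qed.

Lemma ccore1_core_lang : (forall Q, L Q -> exists i, e i = Q) -> ccore1 C L core_lang.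
Proof.
move=> e_onto; split.
- apply/(lang_infiniteP hX) => N; have [x Nx cx] := core_unbounded good_unbounded N.
  by exists (wdecode hX x); rewrite /core_lang wdecodeK.
- by move=> w /core_lang_sub /hAC.
move=> B' B'core B'inf [_ _ [Q [LQ _ CQ B'Q]]].
have [i ei] := e_onto Q LQ; subst Q.
have [M hM] : exists M, forall x, core a c ee x -> ~~ ee i x -> x <= M.
  by apply: (core_bounded_outside good_unbounded) => y; rewrite /c /ee => /CQ.
have [w B'w] := (lang_infiniteP hX _).1 B'inf M.+1.
rewrite ltnNge hM //; first exact: B'core.
by rewrite /ee wcodeK; apply: B'Q.
Qed.

End CoreLanguage.

Theorem theorem5p3 (X : finType) (hX : 0 < #|X|) (L : lfamily X)
  (hnt : nontrivial L) (hwp : WP_recursive L)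
  (hU : closed_union L) (hI : closed_inter L) (hC : closed_compl L)
  (C A : lang X) (hCrec : recursive C) (hArec : recursive A)
  (hAinf : lang_infinite A) (hAC : forall w, A w -> ~~ C w)
  (hAnot : ~ cclass1 C L A) :
  exists B : lang X, [/\ recursive B, lsubset B A & ccore1 C L B].
Proof.
case: hwp => e [Le [e_onto e_rec]].
exists (core_lang hX C A e); split.
- exact: recursive_core_lang.
- exact: core_lang_sub.
- exact: ccore1_core_lang.
Qed.
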